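(* Every finitely presented thin groupoid has deficiency $0$.
   Context: A small graph $G$ consists of a set of objects, a set of arrows, and domain and codomain maps. $\mathcal{L}_1\mathcal{F}_1(G)$ is the free groupoid on $G$. A small groupoidal computad $\mathfrak{g}=(G,\mathfrak{g}_2,s,t)$ is a set $\mathfrak{g}_2$ with, for each $\alpha\in\mathfrak{g}_2$, two parallel morphisms $s(\alpha),t(\alpha)$ of $\mathcal{L}_1\mathcal{F}_1(G)$. It is connected if $G$ is connected. It presents a groupoid $X$ if $X$ is isomorphic to the quotient of $\mathcal{L}_1\mathcal{F}_1(G)$ by the relations $s(\alpha)=t(\alpha)$. $\mathcal{F}_{\mathrm{Top}_1}(G)$ is the topological realization of $G$: vertices, with an interval glued per arrow. $\chi$ is the Euler characteristic with real coefficients. A groupoid $X$ is finitely presented if some small connected groupoidal computad $(G,\mathfrak{g}_2,s,t)$ with $\chi(\mathcal{F}_{\mathrm{Top}_1}(G))\in\mathbb{Z}$ and $\mathfrak{g}_2$ finite presents $X$. The deficiency of such a presentation is $1-|\mathfrak{g}_2|-\chi(\mathcal{F}_{\mathrm{Top}_1}(G))$. This equals $1-\chi$ of the $2$-complex obtained from $\mathcal{F}_{\mathrm{Top}_1}(G)$ by attaching one $2$-cell per $\alpha$ along the loop given by $s(\alpha)$ followed by $t(\alpha)$ reversed. The deficiency of a finitely presented groupoid $X$ is the maximum of the deficiencies of all such finite presentations of $X$. A groupoid is thin if it has at most one morphism between any two objects. *)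

From Stdlib Require Import List ZArith Relations.
Import ListNotations.
Set Implicit Arguments.
Open Scope Z_scope.

Record graph := Graph {
  gV : Type;
  gE : Type;
  gdom : gE -> gV;
  gcod : gE -> gV }.

(** Letters of the free groupoid: an arrow, traversed forwards (true)
    or backwards, i.e. as its formal inverse (false). *)
Definition letter (G : graph) := (gE G * bool)%type.
Definition lsrc (G : graph) (l : letter G) : gV G :=
  if snd l then gdom G (fst l) else gcod G (fst l).
Definition ltgt (G : graph) (l : letter G) : gV G :=
  if snd l then gcod G (fst l) else gdom G (fst l).

Fixpoint is_path (G : graph) (x : gV G) (w : list (letter G)) (y : gV G) : Prop :=
  match w with
  | [] => x = y
  | l :: w' => lsrc l = x /\ is_path (ltgt l) w' y
  end.

(** Formal morphisms x -> y of the free groupoid (before quotienting). *)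
Definition pHom (G : graph) (x y : gV G) :=
  { w : list (letter G) | is_path x w y }.

Definition reduced (G : graph) (w : list (letter G)) : Prop :=
  forall u v e b, w <> u ++ (e, b) :: (e, negb b) :: v.

Definition connected (G : graph) : Prop :=
  inhabited (gV G) /\ forall x y : gV G, exists w, is_path x w y.

Definition spanning_tree (G : graph) (T : gE G -> Prop) : Prop :=
  (forall x y : gV G, exists w, is_path x w y /\ Forall (fun l => T (fst l)) w) /\
  (forall (x : gV G) w, is_path x w x -> reduced w ->
      Forall (fun l => T (fst l)) w -> w = []).

(** Euler characteristic (real coefficients) of the realization of a
    CONNECTED graph G is the integer c: H_0 = R and H_1 has dimension the
    (finite) number k of arrows outside a spanning tree, so c = 1 - k. *)
Definition conn_euler_char (G : graph) (c : Z) : Prop :=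
  exists (T : gE G -> Prop) (l : list (gE G)),
    @spanning_tree G T /\ NoDup l /\ (forall e, ~ T e <-> In e l) /\
    c = 1 - Z.of_nat (length l).

(** * Groupoids (with hom-setoids; strict groupoids are the case heq = eq) *)
Record groupoid := Groupoid {
  gOb : Type;
  gHom : gOb -> gOb -> Type;
  gheq : forall x y, gHom x y -> gHom x y -> Prop;
  gid : forall x, gHom x x;
  (* diagrammatic composition: f : x -> y, g : y -> z gives x -> z *)
  gcomp : forall x y z, gHom x y -> gHom y z -> gHom x z;
  ginv : forall x y, gHom x y -> gHom y x;
  gheq_equiv : forall x y, equivalence _ (@gheq x y);
  gcomp_proper : forall x y z (f f' : gHom x y) (g g' : gHom y z),
      gheq f f' -> gheq g g' -> gheq (gcomp f g) (gcomp f' g');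
  ginv_proper : forall x y (f f' : gHom x y), gheq f f' -> gheq (ginv f) (ginv f');
  gcompA : forall x y z w (f : gHom x y) (g : gHom y z) (h : gHom z w),
      gheq (gcomp f (gcomp g h)) (gcomp (gcomp f g) h);
  gid_l : forall x y (f : gHom x y), gheq (gcomp (gid x) f) f;
  gid_r : forall x y (f : gHom x y), gheq (gcomp f (gid y)) f;
  ginv_l : forall x y (f : gHom x y), gheq (gcomp (ginv f) f) (gid y);
  ginv_r : forall x y (f : gHom x y), gheq (gcomp f (ginv f)) (gid x) }.

Arguments gheq {g x y} _ _ : rename.
Arguments gid g x : rename.
Arguments gcomp {g x y z} _ _ : rename.
Arguments ginv {g x y} _ : rename.

Definition thin (X : groupoid) : Prop :=
  forall x y (f g : gHom X x y), gheq f g.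

Section Presented.
Variables (G : graph) (A : Type) (s t : A -> list (letter G)).

Inductive pstep : list (letter G) -> list (letter G) -> Prop :=
  | pstep_red u v e b : pstep (u ++ (e, b) :: (e, negb b) :: v) (u ++ v)
  | pstep_rel u v a : pstep (u ++ s a ++ v) (u ++ t a ++ v).

(** Equality of morphisms x -> y in the quotient of L1F1(G) by the
    relations: the equivalence generated by elementary moves (through paths). *)
Definition pequiv (x y : gV G) : pHom G x y -> pHom G x y -> Prop :=
  clos_refl_sym_trans _ (fun p q : pHom G x y => pstep (proj1_sig p) (proj1_sig q)).

(** X is isomorphic to the presented groupoid: a bijection on objects and
    a functor that is fully faithful (bijective on hom-sets). *)
Definition presents (X : groupoid) : Prop :=
  exists (f : gV G -> gOb X)
         (F : forall x y, pHom G x y -> gHom X (f x) (f y)),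
    (forall x x', f x = f x' -> x = x') /\
    (forall o, exists x, f x = o) /\
    (forall x (r : pHom G x x), proj1_sig r = [] -> gheq (F x x r) (gid X (f x))) /\
    (forall x y z (p : pHom G x y) (q : pHom G y z) (r : pHom G x z),
        proj1_sig r = proj1_sig p ++ proj1_sig q ->
        gheq (F x z r) (gcomp (F x y p) (F y z q))) /\
    (forall x y (p q : pHom G x y), pequiv p q <-> gheq (F x y p) (F x y q)) /\
    (forall x y (h : gHom X (f x) (f y)), exists p, gheq (F x y p) h).
End Presented.

(** X has a finite presentation of deficiency d :
    a small connected groupoidal computad (G, A, s, t) with A finite and
    chi(F_Top1(G)) = c an integer, presenting X, with d = 1 - |A| - c. *)
Definition fp_deficiency (X : groupoid) (d : Z) : Prop :=
  exists (G : graph) (A : Type) (a0 a1 : A -> gV G) (s t : A -> list (letter G))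
         (lA : list A) (c : Z),
    (forall a, is_path (a0 a) (s a) (a1 a)) /\
    (forall a, is_path (a0 a) (t a) (a1 a)) /\
    connected G /\ conn_euler_char G c /\
    NoDup lA /\ (forall a, In a lA) /\
    presents s t X /\
    d = 1 - Z.of_nat (length lA) - c.

Definition finitely_presented (X : groupoid) : Prop :=
  exists d, fp_deficiency X d.

Definition deficiency (X : groupoid) (d : Z) : Prop :=
  fp_deficiency X d /\ (forall d', fp_deficiency X d' -> d' <= d).

(* In a tree every reduced loop is empty, so any two parallel paths are equal in
   the free groupoid on a tree.  Hence, X being thin, a spanning tree of any
   presentation graph, with no relations at all, already presents X; this
   presentation has deficiency 1 - 0 - 1 = 0.
   Conversely, record for a word the signed number of occurrences of each of the
   k edges outside the spanning tree.  Equivalent words have count vectors that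
   differ by a combination of the relation vectors count(s a) - count(t a).  An
   edge e outside the tree closed up through the tree is a loop equal to the
   identity in the thin groupoid X, and its count vector is the unit vector at e.
   So the |A| relation vectors span a k-dimensional space: k <= |A|, and the
   deficiency 1 - |A| - (1 - k) is at most 0. *)

From Stdlib Require Import ZArith.
From Stdlib Require Import List Relations Lia Classical ClassicalEpsilon ProofIrrelevance.
From mathcomp Require Import all_boot ssralg matrix mxalgebra zmodp zify.
Import GRing.Theory.

Set Implicit Arguments.
Unset Strict Implicit.
Unset Printing Implicit Defensive.
Local Open Scope nat_scope.

Lemma size_length (T : Type) (s : seq T) : size s = length s.
Proof. by elim: s => //= _ s ->. Qed.

Lemma nth_List_nth (T : Type) (x0 : T) (s : seq T) i : nth x0 s i = List.nth i s x0.
Proof. by elim: s i => [|y s IH] [|i] //=. Qed.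

Section FreeGroupoid.
Variable G : graph.
Implicit Types (x y z : gV G) (u v w : seq (letter G)).

Lemma is_path_cat x y z u v : is_path x u y -> is_path y v z -> is_path x (u ++ v) z.
Proof.
elim: u x => [|l u IH] x /=; first by move=> ->.
by case=> <- Hu Hv; split=> //; apply: IH Hu Hv.
Qed.

Lemma is_path_catP x z u v : is_path x (u ++ v) z -> exists2 y, is_path x u y & is_path y v z.
Proof.
elim: u x => [|l u IH] x /=; first by exists x.
by case=> <- /IH [y Hu Hv]; exists y.
Qed.

Inductive cancel_step : seq (letter G) -> seq (letter G) -> Prop :=
  CancelStep u v e b : cancel_step (u ++ (e, b) :: (e, ~~ b) :: v) (u ++ v).

Definition reduces := clos_refl_trans _ cancel_step.

Lemma is_path_reduces x y u v : reduces u v -> is_path x u y -> is_path x v y.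
Proof.
elim=> {u v} [_ _ [u v e b]|//|u w v _ IHuw _ IHwv] Hp; last exact/IHwv/IHuw.
case/is_path_catP: Hp => m Hu /= [Em [_ Hv]].
by apply: is_path_cat Hu _; case: b Em Hv => <-.
Qed.

Lemma reduces_ctx u v w w' : reduces w w' -> reduces (u ++ w ++ v) (u ++ w' ++ v).
Proof.
elim=> {w w'} [_ _ [w1 w2 e b]|w|w1 w2 w3 _ H12 _ H23]; last exact: rt_trans H12 H23.
- by apply: rt_step; have := CancelStep (u ++ w1) (w2 ++ v) e b; rewrite -!catA.
- exact: rt_refl.
Qed.

Definition letter_inv (l : letter G) : letter G := (l.1, ~~ l.2).
Definition word_inv w := rev (map letter_inv w).

Lemma word_inv_cons l w : word_inv (l :: w) = word_inv w ++ [:: letter_inv l].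
Proof. by rewrite /word_inv /= rev_cons cats1. Qed.

Lemma is_path_word_inv x y w : is_path x w y -> is_path y (word_inv w) x.
Proof.
elim: w x => [|[e b] w IH] x /=; first by move=> ->.
case=> <- /IH Hw; rewrite word_inv_cons; apply: is_path_cat Hw _.
by case: b.
Qed.

Lemma reduces_word_invK w : reduces (word_inv w ++ w) [::].
Proof.
elim: w => [|[e b] w IH]; first exact: rt_refl.
apply: rt_trans IH; apply: rt_step.
by rewrite word_inv_cons -catA; have := CancelStep (word_inv w) w e (~~ b); rewrite negbK.
Qed.

Lemma exists_reduced w : exists2 r, reduces w r & reduced r.
Proof.
have [n] := ubnP (size w); elim: n w => // n IH w /ltnSE Hw.
have [wred | wNred] := classic (reduced w); first by exists w => //; apply: rt_refl.
have [u [v [e [b Ew]]]] : exists u v e b, w = u ++ (e, b) :: (e, ~~ b) :: v.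
  by apply: NNPP => Hno; apply: wNred => u v e b Ew; apply: Hno; exists u, v, e, b.
have [|r Hr rred] := IH (u ++ v); first by move: Hw; rewrite Ew !size_cat /=; lia.
by exists r => //; apply: rt_trans Hr; apply: rt_step; rewrite Ew; apply: CancelStep.
Qed.

Lemma reduced_cons l w : reduced (l :: w) -> reduced w.
Proof. by move=> lw u v e b Ew; apply: (lw (l :: u) v e b); rewrite Ew. Qed.

Definition acyclic := forall x w, is_path x w x -> reduced w -> w = [::].

Section Relations.
Variables (A : Type) (s t : A -> seq (letter G)).

Lemma pequiv_reduces x y w w' (hw : is_path x w y) (hw' : is_path x w' y) :
  reduces w w' -> pequiv s t (exist _ w hw) (exist _ w' hw').
Proof.
move=> red_ww'; elim: red_ww' hw hw' => {w w'} [_ _ [u v e b]|w|u w v Huw IHuw _ IHwv] hu hv.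
- exact/rst_step/pstep_red.
- by rewrite (proof_irrelevance _ hu hv); apply: rst_refl.
- have hw := is_path_reduces Huw hu.
  exact: rst_trans (IHuw hu hw) (IHwv hw hv).
Qed.

Lemma acyclic_pequiv : acyclic -> forall x y (p q : pHom G x y), pequiv s t p q.
Proof.
move=> acyc x y [wp hp] [wq hq].
have hpq : is_path x (wp ++ word_inv wq) x := is_path_cat hp (is_path_word_inv hq).
have hm : is_path x ((wp ++ word_inv wq) ++ wq) y := is_path_cat hpq hq.
apply: (rst_trans _ _ _ (exist (fun w => is_path x w y) _ hm)).
- apply/rst_sym/pequiv_reduces.
  by have := reduces_ctx wp [::] (reduces_word_invK wq); rewrite !cats0 catA.
- apply: pequiv_reduces.
  have [r red_r r_red] := exists_reduced (wp ++ word_inv wq).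
  have r_nil := acyc _ _ (is_path_reduces red_r hpq) r_red.
  by rewrite r_nil in red_r; exact: (reduces_ctx [::] wq red_r).
Qed.
End Relations.
End FreeGroupoid.

Definition no_relations (H : graph) (a : Empty_set) : seq (letter H) := match a with end.

Section SpanningSubgraph.
Variables (G : graph) (T : gE G -> Prop).

Definition subgraph : graph :=
  @Graph (gV G) {e | T e} (fun e => gdom G (sval e)) (fun e => gcod G (sval e)).

Definition subletter (l : letter subgraph) : letter G := (sval l.1, l.2).

Lemma is_path_subgraph x w y :
  is_path (G := subgraph) x w y <-> is_path (G := G) x (map subletter w) y.
Proof.
elim: w x => [|[[e he] b] w IH] x //=.
by rewrite -IH; case: b.
Qed.

Lemma subgraph_word w : Forall (fun l => T l.1) w -> exists w', w = map subletter w'.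
Proof.
elim=> [|[e b] {}w Te _ [w' ->]]; first by exists [::].
by exists ((exist _ e Te, b) :: w').
Qed.

Lemma reduced_subgraph w : reduced w -> reduced (map subletter w).
Proof.
elim: w => [|l1 w IH] wred [|l u] v e b //=.
- case: w wred {IH} => [|l2 w] wred //=.
  case: l1 l2 wred => [[e1 h1] b1] [[e2 h2] b2] wred [<- <- E2 B2 _] /=.
  subst e2 b2; rewrite (proof_irrelevance _ h2 h1) in wred.
  exact: (wred [::] w (exist _ e1 h1) b1).
- by case=> _; apply: IH (reduced_cons wred) u v e b.
Qed.

Hypothesis T_span : spanning_tree G T.

Lemma subgraph_path x y : exists w, is_path (G := subgraph) x w y.
Proof.
have [w [Hw /subgraph_word [w' Ew]]] := T_span.1 x y.
by exists w'; apply/is_path_subgraph; rewrite -Ew.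
Qed.

Lemma subgraph_acyclic : acyclic subgraph.
Proof.
move=> x w /is_path_subgraph Hw /reduced_subgraph wred.
suff : map subletter w = [::] by case: w {Hw wred}.
apply: T_span.2 Hw wred _.
by elim: w => [|l w IH] //=; constructor => //; apply: proj2_sig.
Qed.

Lemma subgraph_spanning_tree : spanning_tree subgraph (fun _ => True).
Proof.
split=> [x y | x w Hw wred _]; last exact: subgraph_acyclic Hw wred.
have [w Hw] := subgraph_path x y.
by exists w; split=> //; apply/Forall_forall.
Qed.

Lemma presents_subgraph (X : groupoid) (A : Type) (s t : A -> seq (letter G)) :
  thin X -> presents s t X -> presents (no_relations subgraph) (no_relations subgraph) X.
Proof.
move=> thinX [f [F [f_inj [f_surj [F_id [F_comp _]]]]]].
pose F' x y (p : pHom subgraph x y) : gHom X (f x) (f y) :=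
  F x y (exist _ (map subletter (sval p)) ((is_path_subgraph _ _ _).1 (proj2_sig p))).
exists f, F'; do 2!split=> //; split; [|split; [|split]].
- by move=> x r r_nil; apply: F_id; rewrite /= r_nil.
- by move=> x y z p q r Er; apply: F_comp; rewrite /= Er map_cat.
- by move=> x y p q; split=> _; [apply: thinX | exact: (acyclic_pequiv _ _ subgraph_acyclic)].
- move=> x y h; have [w Hw] := subgraph_path x y.
  by exists (exist _ w Hw); apply: thinX.
Qed.
End SpanningSubgraph.

Lemma tree_euler_char (H : graph) : spanning_tree H (fun _ => True) -> conn_euler_char H 1%Z.
Proof. by move=> H_tree; exists (fun _ => True), [::]; do !split=> //; constructor. Qed.

Lemma thin_fp_deficiency0 (X : groupoid) : thin X -> finitely_presented X -> fp_deficiency X 0%Z.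
Proof.
move=> thinX [_ [G [A [_ [_ [s [t [_ [_ [_ [_ [[G_inh _] [[T [_ [T_span _]]] [_ [_ [presX _]]]]]]]]]]]]]]]].
exists (subgraph T), Empty_set, (Empty_set_rect _), (Empty_set_rect _).
exists (no_relations _), (no_relations _), [::], 1%Z.
do ![split; first by case].
split; first by split=> //; apply: subgraph_path.
split; first exact/tree_euler_char/subgraph_spanning_tree.
split; first by constructor.
split; first by case.
by split; first exact: presents_subgraph presX.
Qed.

Section Abelianization.
Local Open Scope ring_scope.
Variables (F : fieldType) (G : graph) (l : seq (gE G)).

Definition abel_letter (x : letter G) : 'rV[F]_(size l) :=
  \row_i if excluded_middle_informative (x.1 = tnth (in_tuple l) i)
         then (if x.2 then 1 else -1) else 0.

Definition abel (w : seq (letter G)) : 'rV[F]_(size l) := \sum_(x <- w) abel_letter x.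

Lemma abel_cat u v : abel (u ++ v) = abel u + abel v.
Proof. exact: big_cat. Qed.

Lemma abel_letter_inv e b : abel_letter (e, ~~ b) = - abel_letter (e, b).
Proof.
apply/rowP => i; rewrite !mxE /=.
by case: excluded_middle_informative => ? /=; case: b; rewrite ?opprK ?oppr0.
Qed.

Lemma abel_cancel u v e b : abel (u ++ (e, b) :: (e, ~~ b) :: v) = abel (u ++ v).
Proof. by rewrite !abel_cat /abel !big_cons abel_letter_inv addNKr. Qed.

Lemma abel_notin w : Forall (fun x => ~ In x.1 l) w -> abel w = 0.
Proof.
elim=> [|x {}w x_notin _ IH]; first exact: big_nil.
rewrite /abel big_cons -/(abel w) IH addr0.
apply/rowP => i; rewrite !mxE.
case: excluded_middle_informative => // Ex; case: x_notin.
by rewrite Ex (tnth_nth x.1) nth_List_nth; apply/nth_In/ltP; rewrite -size_length.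
Qed.

Lemma abel_letter_tnth i : NoDup l -> abel_letter (tnth (in_tuple l) i, true) = delta_mx 0 i.
Proof.
move=> l_nodup; apply/rowP => j; rewrite !mxE eqxx /=.
case: excluded_middle_informative => [Eij | NEij] /=.
  suff -> : i = j by rewrite eqxx.
  apply/val_inj/(NoDup_nth l (tnth (in_tuple l) i)).1 => //;
    rewrite -?size_length; try exact/ltP/ltn_ord.
  by rewrite -!nth_List_nth -!(tnth_nth _ (in_tuple l)).
by case: eqP => // Eji; case: NEij; rewrite Eji.
Qed.

Variables (A : Type) (s t : A -> seq (letter G)) (lA : seq A).

Definition relation_mx : 'M[F]_(size lA, size l) :=
  \matrix_j (abel (s (tnth (in_tuple lA) j)) - abel (t (tnth (in_tuple lA) j))).

Hypothesis lA_full : forall a, In a lA.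

Lemma relation_sub a : (abel (s a) - abel (t a) <= relation_mx)%MS.
Proof.
have [n [n_lt <-]] := In_nth lA a a (lA_full a).
move/ltP: n_lt; rewrite -size_length => n_lt.
suff -> : List.nth n lA a = tnth (in_tuple lA) (Ordinal n_lt).
  by have := row_sub (Ordinal n_lt) relation_mx; rewrite rowK.
by rewrite (tnth_nth a) nth_List_nth.
Qed.

Lemma pstep_sub u v : pstep s t u v -> (abel u - abel v <= relation_mx)%MS.
Proof.
case=> [w1 w2 e b | w1 w2 a]; first by rewrite abel_cancel subrr sub0mx.
suff -> : abel (w1 ++ s a ++ w2) - abel (w1 ++ t a ++ w2) = abel (s a) - abel (t a).
  exact: relation_sub.
by rewrite !abel_cat opprD addrACA subrr add0r opprD addrACA subrr addr0.
Qed.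

Lemma pequiv_sub x y (p q : pHom G x y) :
  pequiv s t p q -> (abel (sval p) - abel (sval q) <= relation_mx)%MS.
Proof.
elim=> {p q} [p q /pstep_sub // | p | p q _ IH | p q r _ IHpq _ IHqr].
- by rewrite subrr sub0mx.
- by rewrite -opprB eqmx_opp.
- have -> : abel (sval p) - abel (sval r) =
            (abel (sval p) - abel (sval q)) + (abel (sval q) - abel (sval r)).
    by rewrite addrA subrK.
  exact: addmx_sub.
Qed.
End Abelianization.

Lemma thin_presented_pequiv (X : groupoid) (G : graph) (A : Type) (s t : A -> seq (letter G)) :
  thin X -> presents s t X -> forall x y (p q : pHom G x y), pequiv s t p q.
Proof. by move=> thinX [f [F [_ [_ [_ [_ [F_faithful _]]]]]]] x y p q; apply/F_faithful/thinX. Qed.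

Lemma nontree_edges_le_relations (G : graph) (T : gE G -> Prop) (l : seq (gE G))
    (A : Type) (s t : A -> seq (letter G)) (lA : seq A) :
  (forall x y (p q : pHom G x y), pequiv s t p q) ->
  spanning_tree G T -> NoDup l -> (forall e, ~ T e <-> In e l) -> (forall a, In a lA) ->
  size l <= size lA.
Proof.
move=> pequiv_all T_span l_nodup l_nontree lA_full.
(* Counting modulo 2 already suffices; any field would do. *)
suff : row_full (relation_mx 'F_2 l s t lA).
  by rewrite -col_leq_rank => /leq_trans; apply; apply: rank_leq_row.
rewrite -sub1mx; apply/row_subP => i; rewrite row1.
set e := tnth (in_tuple l) i.
have [w [Hw w_tree]] := T_span.1 (gcod G e) (gdom G e).
have loop : is_path (gdom G e) ((e, true) :: w) (gdom G e) by [].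
have nil_loop : is_path (gdom G e) [::] (gdom G e) by [].
have := pequiv_sub 'F_2 l lA_full (pequiv_all _ _ (exist (fun u => is_path _ u _) _ loop)
                                            (exist (fun u => is_path _ u _) _ nil_loop)).
rewrite /= /abel big_nil subr0 big_cons -/(abel _ _ w) abel_notin ?addr0 ?abel_letter_tnth //.
by apply: Forall_impl w_tree => x Tx /l_nontree.
Qed.

Theorem mainTheorem12 (X : groupoid) :
  thin X -> finitely_presented X -> deficiency X 0%Z.
Proof.
move=> thinX fpX; split; first exact: thin_fp_deficiency0.
move=> d [G [A [a0 [a1 [s [t [lA [c presentation]]]]]]]].
case: presentation => _ [_ [_ [[T [l [T_span [l_nodup [l_nontree ->]]]]] [_ [lA_full [presX ->]]]]]].
have := nontree_edges_le_relations (thin_presented_pequiv thinX presX) T_span l_nodup l_nontree lA_full.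
rewrite !size_length; lia.
Qed.
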